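(* Suppose the Hasse diagram $\Gamma$ of $\rho$ consists of vertices $1,\dots,m+p$ ($m\ge3$, $p\ge1$) and exactly two paths from vertex $1$ to vertex $m$: $a_1\cdots a_{m-1}$ through vertices $1,2,\dots,m-1,m$, and $b_1\cdots b_{p+1}$ through vertices $1,m+p,\dots,m+1,m$ (internally disjoint), and no other arrows. Then for every group $G$, every transitive function $u:\rho\to G$ is trivial.
   Context: $\rho$ is a preorder on a finite set; $\mathcal C$ the poset of its equivalence classes ($i\sim j$ iff $i\rho j$ and $j\rho i$; $\hat i\le\hat j$ iff $i\rho j$). $\Gamma$ is the directed graph with vertex set $\mathcal C$ and an arrow from $\alpha$ to $\beta$ iff $\alpha<\beta$ with nothing strictly between. A transitive function on $\rho$ with values in $G$ is $u:\rho\to G$ with $u(i,j)u(j,r)=u(i,r)$ whenever $i\rho j$, $j\rho r$; it is trivial if there are $g_i\in G$ with $u(i,j)=g_ig_j^{-1}$ for all $i\rho j$. *)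

From mathcomp Require Import all_boot.
Set Implicit Arguments. Unset Strict Implicit. Unset Printing Implicit Defensive.

Record Grp := {
  gcarrier :> Type;
  gmul : gcarrier -> gcarrier -> gcarrier;
  gone : gcarrier;
  ginv : gcarrier -> gcarrier;
  gmulA : forall x y z, gmul x (gmul y z) = gmul (gmul x y) z;
  gmul1 : forall x, gmul gone x = x;
  gmulV : forall x, gmul (ginv x) x = gone
}.

Definition is_preorder (T : finType) (rho : rel T) :=
  reflexive rho /\ transitive rho.

(* Strict order on equivalence classes, read on representatives:
   hat i < hat j  iff  i rho j and not j rho i. *)
Definition cls_lt (T : finType) (rho : rel T) (i j : T) : bool :=
  rho i j && ~~ rho j i.

Definition hasse_arrow (T : finType) (rho : rel T) (i j : T) : bool :=
  cls_lt rho i j && ~~ [exists k, cls_lt rho i k && cls_lt rho k j].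

(* The model graph on vertices 1..m+p, encoded 0-indexed on 'I_(m+p)
   (vertex v is encoded as v-1). Arrows:
     a_k : k -> k+1 (k = 1..m-1);
     b   : 1 -> m+p, (k+1) -> k (k = m+1..m+p-1), m+1 -> m. *)
Definition model_arrow (m p : nat) (x y : 'I_(m + p)) : bool :=
  [|| (y == x.+1 :> nat) && (x < m.-1),
      (x == 0 :> nat) && (y == (m + p).-1 :> nat),
      (m <= y) && (x == y.+1 :> nat)
    | (x == m :> nat) && (y == m.-1 :> nat)].

Definition hasse_is_model (T : finType) (rho : rel T) (m p : nat) :=
  exists phi : T -> 'I_(m + p),
    [/\ forall v, exists i, phi i = v,
        forall i j, (phi i == phi j) = (rho i j && rho j i)
      & forall i j, hasse_arrow rho i j = model_arrow (phi i) (phi j)].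

(* Transitive function on rho with values in G (only its values on pairs
   i rho j matter). *)
Definition transitive_fun (T : finType) (rho : rel T) (G : Grp)
    (u : T -> T -> G) :=
  forall i j r, rho i j -> rho j r -> gmul (u i j) (u j r) = u i r.

Definition trivial_fun (T : finType) (rho : rel T) (G : Grp)
    (u : T -> T -> G) :=
  exists g : T -> G, forall i j, rho i j -> u i j = gmul (g i) (ginv (g j)).

From mathcomp Require Import all_boot zify.

(* Vertex 1 is the only vertex of the model graph without an incoming arrow.
   A minimal class of rho has no incoming arrow in the Hasse diagram, and
   every class lies above a minimal one since T is finite; hence the class
   of vertex 1 is the least class.  A transitive function on a preorder with
   a least element b is trivial, with g i := u(b, i)^-1. *)

Section GroupFacts.
Variable G : Grp.

Lemma grp_mulKg (x y : G) : gmul (ginv x) (gmul x y) = y.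
Proof. by rewrite gmulA gmulV gmul1. Qed.

Lemma grp_mulgV (x : G) : gmul x (ginv x) = gone G.
Proof. by rewrite -[gmul x _]gmul1 -{1}(gmulV (ginv x)) -gmulA (grp_mulKg x) gmulV. Qed.

Lemma grp_mulg1 (x : G) : gmul x (gone G) = x.
Proof. by rewrite -(gmulV x) gmulA grp_mulgV gmul1. Qed.

Lemma grp_invgK (x : G) : ginv (ginv x) = x.
Proof. by have := grp_mulKg (ginv x) x; rewrite gmulV grp_mulg1. Qed.

End GroupFacts.

Lemma trivial_fun_of_least (T : finType) (rho : rel T) (G : Grp)
    (u : T -> T -> G) (b : T) :
  (forall i, rho b i) -> transitive_fun rho u -> trivial_fun rho u.
Proof.
move=> least_b hu; exists (fun i => ginv (u b i)) => i j rho_ij.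
by rewrite grp_invgK -(hu b i j (least_b i) rho_ij) grp_mulKg.
Qed.

Section MinimalClasses.
Variables (T : finType) (rho : rel T).
Hypotheses (rho_refl : reflexive rho) (rho_trans : transitive rho).

Lemma cls_lt_trans : transitive (cls_lt rho).
Proof.
move=> j i k /andP[rho_ij n_rho_ji] /andP[rho_jk n_rho_kj]; apply/andP; split.
  exact: rho_trans rho_ij rho_jk.
by apply: contra n_rho_kj => rho_ki; exact: rho_trans rho_ki rho_ij.
Qed.

Lemma card_cls_lt_below {k i : T} :
  cls_lt rho k i -> #|[pred l | cls_lt rho l k]| < #|[pred l | cls_lt rho l i]|.
Proof.
move=> lt_ki; apply/proper_card/properP; split.
  by apply/subsetP => l; rewrite !inE => lt_lk; exact: cls_lt_trans lt_ki.
by exists k; rewrite inE // /cls_lt andbN.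
Qed.

Lemma minimal_below (i : T) :
  exists2 k, rho k i & forall l, ~~ cls_lt rho l k.
Proof.
elim: {i}_.+1 {-2}i (ltnSn #|[pred l | cls_lt rho l i]|) => // n IHn i.
case: (pickP [pred l | cls_lt rho l i]) => [k lt_ki | no_lt] card_i.
  have [l rho_lk min_l] := IHn k (leq_trans (card_cls_lt_below lt_ki) card_i).
  by exists l => //; apply: rho_trans rho_lk _; case/andP: lt_ki.
by exists i => // l; apply/negbT; exact: no_lt.
Qed.

Lemma least_of_unique_minimal (b : T) :
  (forall i, (forall l, ~~ cls_lt rho l i) -> rho b i) -> forall i, rho b i.
Proof.
move=> minimal_above_b i; have [k rho_ki min_k] := minimal_below i.
exact: rho_trans (minimal_above_b k min_k) rho_ki.
Qed.

End MinimalClasses.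

Lemma model_arrow_into (m p : nat) (y : 'I_(m + p)) :
  y != 0 :> nat -> exists x : 'I_(m + p), model_arrow x y.
Proof.
move=> /negPf y_neq0; have y_lt := ltn_ord y; rewrite /model_arrow.
case: (ltnP y m) => [y_lt_m | m_le_y].
  have ltx : y.-1 < m + p by lia.
  by exists (Ordinal ltx) => /=; lia.
case: (ltnP y.+1 (m + p)) => [ltx | y_last].
  by exists (Ordinal ltx) => /=; lia.
have ltx : 0 < m + p by lia.
by exists (Ordinal ltx) => /=; lia.
Qed.

Theorem mainTheorem13 (T : finType) (rho : rel T) (m p : nat) :
  is_preorder rho -> 3 <= m -> 1 <= p -> hasse_is_model rho m p ->
  forall (G : Grp) (u : T -> T -> G),
    transitive_fun rho u -> trivial_fun rho u.
Proof.
move=> [rho_refl rho_trans] _ p_gt0 [phi [phi_onto phi_eq phi_arrow]] G u hu.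
have vertex1 : 0 < m + p by rewrite addn_gt0 p_gt0 orbT.
have [b phi_b] := phi_onto (Ordinal vertex1).
apply: (@trivial_fun_of_least T rho G u b _ hu).
apply: least_of_unique_minimal => // i min_i.
have phi_i0 : nat_of_ord (phi i) = 0.
  apply/eqP; apply: contraT => /model_arrow_into[x arrow_xi].
  have [j phi_j] := phi_onto x.
  move: arrow_xi; rewrite -phi_j -phi_arrow => /andP[lt_ji _].
  by move: (min_i j); rewrite lt_ji.
have : phi b == phi i by rewrite phi_b; apply/eqP/val_inj; rewrite /= phi_i0.
by rewrite phi_eq => /andP[].
Qed.
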